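(* Let $p$ be an odd prime with $p\equiv 1\pmod 4$ such that a perfect $B[-1,3](p)$ set exists. Then the multiplicative order of $-\tfrac23$ (i.e. of $-2\cdot 3^{-1}\bmod p$) in $\mathbb{Z}_p^\ast$ is odd.
   Context: $\mathbb{Z}_p^\ast$ is the multiplicative group of nonzero residues modulo $p$. A set $B\subseteq\mathbb{Z}_p$ is a perfect $B[-1,3](p)$ set if every nonzero element of $\mathbb{Z}_p$ has a unique representation $ab \bmod p$ with $a\in\{-1,1,2,3\}$ and $b\in B$ (and $0$ has no such representation); equivalently $B\subseteq\mathbb{Z}_p^\ast$, $|B|=(p-1)/4$, and the sets $\{-b,b,2b,3b\}$, $b\in B$, partition $\mathbb{Z}_p^\ast$. *)

From HB Require Import structures.
From mathcomp Require Import all_boot all_order all_algebra all_fingroup.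
Set Implicit Arguments. Unset Strict Implicit. Unset Printing Implicit Defensive.
Import GRing.Theory.
Local Open Scope ring_scope.

Definition mult_set (R : nzRingType) (i : 'I_4) : R :=
  match val i with 0%N => -1 | 1%N => 1 | 2%N => 2%:R | _ => 3%:R end.

Definition nreps (p : nat) (B : {set 'F_p}) (x : 'F_p) : nat :=
  #|[set ab : 'I_4 * 'F_p | (ab.2 \in B) && (x == mult_set _ ab.1 * ab.2)]|.

(* perfect B[-1,3](p) set: every nonzero residue has exactly one
   representation a*b, and 0 has none *)
Definition perfect_B13 (p : nat) (B : {set 'F_p}) : Prop :=
  forall x : 'F_p, nreps B x = (x != 0 : nat).

(* multiplicative order of a unit x of 'F_p in the unit group (1 if x is not a unit) *)
Definition mord (p : nat) (x : 'F_p) : nat :=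
  #[insubd (1 : {unit 'F_p}) x]%g.

From HB Require Import structures.
From mathcomp Require Import all_boot all_order all_algebra all_fingroup.
From mathcomp Require Import cyclic zify.
Set Implicit Arguments.
Unset Strict Implicit.
Unset Printing Implicit Defensive.
Import GRing.Theory.
Local Open Scope ring_scope.

(* Let B be a perfect B[-1,3](p) set and g = -2/3.  The proof has three parts.
   1. Unique factorisation: a product a*b with a in {-1,1,2,3}, b in B
      determines (a, b), and every nonzero residue is such a product.  In
      particular 0 is not in B and B never contains both b and -b, since
      (-1)*b = 1*(-b).
   2. Closure: B is stable under multiplication by g.  Write -2b = a*b'; the
      cases a = -1, 1, 2 would give a second factorisation of 2b or of -b, so
      a = 3 and b' = g*b lies in B.  Hence g^k*b is in B for all k.
   3. Group theory: a unit of even order 2m in a finite field satisfies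
      g^m = -1, because -1 is the only nontrivial square root of 1.
   If g had even order 2m, then for any b in B also g^m*b = -b would be in B,
   contradicting part 1. *)

Definition mult_neg1 : 'I_4 := @Ordinal 4 0 isT.
Definition mult_one : 'I_4 := @Ordinal 4 1 isT.
Definition mult_two : 'I_4 := @Ordinal 4 2 isT.

Section PerfectSet.

Variables (p : nat) (B : {set 'F_p}).
Hypothesis perfB : perfect_B13 B.

Lemma factor_unique (i j : 'I_4) (b1 b2 : 'F_p) :
  b1 \in B -> b2 \in B -> mult_set _ i * b1 = mult_set _ j * b2 ->
  (i, b1) = (j, b2).
Proof.
move=> b1B b2B eq_prod.
have := perfB (mult_set _ i * b1); rewrite /nreps.
set S := [set _ | _] => cardS.
have /card_le1_eqP le1S : (#|S| <= 1)%N by rewrite cardS; case: (_ != 0).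
by apply: le1S; rewrite inE /= ?b1B ?b2B /= -?eq_prod eqxx.
Qed.

Lemma factor_exists (x : 'F_p) :
  x != 0 -> exists i, exists2 b, b \in B & x = mult_set _ i * b.
Proof.
move=> x_neq0; have := perfB x; rewrite x_neq0 /nreps.
set S := [set _ | _] => cardS.
have /card_gt0P[[i b]] : (0 < #|S|)%N by rewrite cardS.
by rewrite inE /= => /andP[bB /eqP ->]; exists i, b.
Qed.

Lemma perfect_B13_nonempty : exists b, b \in B.
Proof. by have [_ [b bB _]] := @factor_exists 1 (oner_neq0 _); exists b. Qed.

(* B never contains an element together with its opposite, since
   (-1) * b = 1 * (-b). *)
Lemma perfect_B13_opp (b : 'F_p) : b \in B -> - b \notin B.
Proof.
move=> bB; apply/negP => nbB.
suff : (mult_neg1, b) = (mult_one, - b) by case.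
by apply: factor_unique; rewrite /mult_set /= ?mulN1r ?mul1r.
Qed.

(* In particular 0 = -0 is not in B. *)
Lemma perfect_B13_nonzero (b : 'F_p) : b \in B -> b != 0.
Proof.
move=> bB; apply/eqP => b0; have := perfect_B13_opp bB.
by rewrite {1}b0 oppr0 -b0 bB.
Qed.

Hypotheses (two_neq0 : 2%:R != 0 :> 'F_p) (three_neq0 : 3%:R != 0 :> 'F_p).

Lemma perfect_B13_mul_closed (b : 'F_p) : b \in B -> (- 2%:R / 3%:R) * b \in B.
Proof.
move=> bB; have b_neq0 := perfect_B13_nonzero bB.
have m2b_neq0 : - 2%:R * b != 0 by rewrite mulf_neq0 ?oppr_eq0.
have [i [b' b'B]] := factor_exists m2b_neq0.
case: i => [[|[|[|[|//]]]] lt_i4]; rewrite /mult_set /= => eq_prod.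
- (* -2b = -b' makes b' = 2b a second factorisation of 2b *)
  suff : (mult_one, b') = (mult_two, b) by case.
  apply: factor_unique; rewrite /mult_set //= mul1r.
  by apply: oppr_inj; rewrite -mulN1r -eq_prod mulNr.
- (* -2b = b' makes -b' = 2b a second factorisation of 2b *)
  suff : (mult_neg1, b') = (mult_two, b) by case.
  apply: factor_unique; rewrite /mult_set //= mulN1r.
  by rewrite -[b']mul1r -eq_prod mulNr opprK.
- (* 2b' = -2b gives b' = -b, impossible *)
  have b'_eq : b' = - b by apply: (mulfI two_neq0); rewrite -eq_prod mulrN mulNr.
  by move: b'B; rewrite b'_eq (negbTE (perfect_B13_opp bB)).
- (* 3b' = -2b, so b' = (-2/3) b *)
  suff -> : - 2%:R / 3%:R * b = b' by [].
  by apply: (mulfI three_neq0); rewrite -eq_prod mulrA mulrCA mulfV ?mulr1.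
Qed.

Lemma perfect_B13_mulX_closed (b : 'F_p) (k : nat) :
  b \in B -> (- 2%:R / 3%:R) ^+ k * b \in B.
Proof.
move=> bB; elim: k => [|k IHk]; first by rewrite mul1r.
by rewrite exprS -mulrA perfect_B13_mul_closed.
Qed.

End PerfectSet.

(* In a finite field, a unit u of even order 2m satisfies u^m = -1: u^m
   squares to 1, is different from 1 by minimality of the order, and the only
   square roots of 1 are 1 and -1. *)
Lemma unit_even_order_half (F : finFieldType) (u : {unit F}) :
  ~~ odd #[u]%g -> val u ^+ (#[u]%g)./2 = -1.
Proof.
move=> even_ord; set m := (#[u]%g)./2.
have ord_eq : #[u]%g = (m * 2)%N.
  by rewrite -[LHS]odd_double_half (negbTE even_ord) add0n -muln2.
have sq1 : (val u ^+ m) ^+ 2 = 1.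
  by rewrite -exprM -FinRing.val_unitX -ord_eq expg_order.
have neq1 : val u ^+ m != 1.
  apply/eqP => um1; have : (#[u]%g %| m)%N.
    by rewrite order_dvdn; apply/eqP/val_inj; rewrite FinRing.val_unitX um1.
  by move/dvdn_leq; rewrite ord_eq; have := order_gt0 u; lia.
by move/eqP: sq1; rewrite sqrf_eq1 (negbTE neq1) => /eqP.
Qed.

Lemma Fp_natr_neq0 (p n : nat) : prime p -> (0 < n < p)%N -> n%:R != 0 :> 'F_p.
Proof.
move=> pr_p /andP[n_gt0 n_ltp]; rewrite -(dvdn_pcharf (pchar_Fp pr_p)).
by apply/negP => /dvdn_leq; lia.
Qed.

Theorem lemma4p5 (p : nat) (pr_p : prime p) (p_odd : odd p) (p_mod4 : (p %% 4 = 1)%N)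
  (B : {set 'F_p}) (HB : perfect_B13 B) :
  odd (mord (- 2%:R / 3%:R : 'F_p)).
Proof.
(* p = 1 (mod 4) rules out p = 3, so 2 and 3 are invertible mod p *)
have p_gt3 : (3 < p)%N.
  by case: p pr_p p_mod4 {p_odd B HB} => [|[|[|[|]]]].
have two_neq0 : 2%:R != 0 :> 'F_p by apply: Fp_natr_neq0; lia.
have three_neq0 : 3%:R != 0 :> 'F_p by apply: Fp_natr_neq0; lia.
set g : 'F_p := - 2%:R / 3%:R.
have g_unit : g \is a GRing.unit.
  by rewrite unitfE mulf_neq0 ?oppr_eq0 ?invr_eq0.
rewrite /mord; set u := insubd _ _.
have val_u : val u = g by rewrite /u insubdK.
apply/negPn/negP => /unit_even_order_half; rewrite val_u => g_half.
have [b bB] := perfect_B13_nonempty HB.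
have := perfect_B13_mulX_closed HB two_neq0 three_neq0 (#[u]%g)./2 bB.
by rewrite g_half mulN1r (negbTE (perfect_B13_opp HB bB)).
Qed.
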